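(* Let $a,\Theta\in l_0(\mathbb{Z})$ be such that $\Theta^\star=\Theta$, let $n_b$ be a positive integer with $n_b\le\min\{\mathrm{sr}(a),\tfrac12\mathrm{vm}(\mathsf{\Theta}(z)-\mathsf{\Theta}(z^2)\mathsf{a}^\star(z)\mathsf{a}(z))\}$, and let $b=(b_1,b_2)^\top\in (l_0(\mathbb{Z}))^{2\times 1}$. Suppose that $\{a;b_1,b_2\}_{\Theta,(1,-1)}$ is a quasi-tight framelet filter bank such that $\min\{\mathrm{vm}(b_1),\mathrm{vm}(b_2)\}\ge n_b$. Then $$\mathcal{N}_{\mathsf{a},\mathsf{\Theta}|n_b}(z)=\begin{bmatrix}\mathring{\mathsf{b}}^{[0]}(z)&\mathring{\mathsf{b}}^{[1]}(z)\end{bmatrix}^\star\mathrm{diag}(1,-1)\begin{bmatrix}\mathring{\mathsf{b}}^{[0]}(z)&\mathring{\mathsf{b}}^{[1]}(z)\end{bmatrix}$$ holds, where $\mathring{b}\in (l_0(\mathbb{Z}))^{2\times1}$ satisfies $\mathsf{b}(z)=(1-z)^{n_b}\mathring{\mathsf{b}}(z)$. Conversely, suppose that there exists a matrix of Laurent polynomials $\mathsf{V}=\begin{bmatrix}\mathsf{V}_{1,1} &\mathsf{V}_{1,2}\\ \mathsf{V}_{2,1} &\mathsf{V}_{2,2}\end{bmatrix}$ such that $\mathcal{N}_{\mathsf{a},\mathsf{\Theta}|n_b}=\mathsf{V}^{\star}\mathrm{diag}(1,-1)\mathsf{V}$. Define $\mathring{b}$ through $\mathring{\mathsf{b}}^{[0]}:=(\mathsf{V}_{1,1},\mathsf{V}_{2,1})^\top$,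 $\mathring{\mathsf{b}}^{[1]}:=(\mathsf{V}_{1,2},\mathsf{V}_{2,2})^\top$ (i.e. $\mathring{\mathsf{b}}(z)=\mathring{\mathsf{b}}^{[0]}(z^2)+z\mathring{\mathsf{b}}^{[1]}(z^2)$), and define $b$ by $\mathsf{b}(z):=(1-z)^{n_b}\mathring{\mathsf{b}}(z)$. Then $\{a;b_1,b_2\}_{\Theta,(1,-1)}$ is a quasi-tight framelet filter bank such that $\min\{\mathrm{vm}(b_1),\mathrm{vm}(b_2)\}\ge n_b$.
   Context: For a finitely supported filter $u$, $\mathsf{u}(z)=\sum_k u(k)z^k$, $\mathsf{u}^\star(z)=\sum_k\overline{u(k)}^{\top}z^{-k}$, and $u^\star=\overline{u(-\cdot)}^\top$. $\mathrm{vm}(b)$ is the largest $m$ with $(z-1)^m\mid\mathsf{b}(z)$; $\mathrm{sr}(a)$ is the largest $n$ with $(z+1)^n\mid\mathsf{a}(z)$. $\{a;b_1,b_2\}_{\Theta,(1,-1)}$ is a quasi-tight framelet filter bank if for all $z\in\mathbb{C}\setminus\{0\}$: $\mathsf{\Theta}(z^2)\mathsf{a}^\star(z)\mathsf{a}(z)+\mathsf{b}_1^\star(z)\mathsf{b}_1(z)-\mathsf{b}_2^\star(z)\mathsf{b}_2(z)=\mathsf{\Theta}(z)$ and $\mathsf{\Theta}(z^2)\mathsf{a}^\star(z)\mathsf{a}(-z)+\mathsf{b}_1^\star(z)\mathsf{b}_1(-z)-\mathsf{b}_2^\star(z)\mathsf{b}_2(-z)=0$. The $\gamma$-coset sequence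 of $u$ is $u^{[\gamma]}(k)=u(\gamma+2k)$, so $\mathsf{u}(z)=\mathsf{u}^{[0]}(z^2)+z\mathsf{u}^{[1]}(z^2)$. Define the Laurent polynomials $\mathsf{A}(z):=\frac{\mathsf{\Theta}(z)-\mathsf{\Theta}(z^2)\mathsf{a}^\star(z)\mathsf{a}(z)}{(1-z)^{n_b}(1-z^{-1})^{n_b}}$ and $\mathsf{B}(z):=\frac{-\mathsf{\Theta}(z^2)\mathsf{a}^\star(z)\mathsf{a}(-z)}{(1-z^{-1})^{n_b}(1+z)^{n_b}}$, and $$\mathcal{N}_{\mathsf{a},\mathsf{\Theta}|n_b}(z):=\frac12\begin{bmatrix}\mathsf{A}^{[0]}(z)+\mathsf{B}^{[0]}(z)&\mathsf{A}^{[1]}(z)-\mathsf{B}^{[1]}(z)\\ z(\mathsf{A}^{[1]}(z)+\mathsf{B}^{[1]}(z))&\mathsf{A}^{[0]}(z)-\mathsf{B}^{[0]}(z)\end{bmatrix}.$$ *)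

From HB Require Import structures.
From mathcomp Require Import all_boot all_order all_algebra.
From mathcomp Require Import zify.
Set Implicit Arguments. Unset Strict Implicit. Unset Printing Implicit Defensive.
Import Order.TTheory GRing.Theory Num.Theory.
Local Open Scope ring_scope.

Section LaurentFilters.
Variable C : numClosedFieldType.

Record lpoly := LPoly {
  lcoef : int -> C;
  lbnd : nat;
  lcoefP : forall k : int, (lbnd < `|k|)%N -> lcoef k = 0 }.

Definition lev (u : lpoly) (z : C) : C :=
  \sum_(i < (lbnd u).*2.+1)
     lcoef u (i%:Z - (lbnd u)%:Z) * z ^ (i%:Z - (lbnd u)%:Z).

Definition lstar_ev (u : lpoly) (z : C) : C :=
  \sum_(i < (lbnd u).*2.+1)
     (lcoef u (i%:Z - (lbnd u)%:Z))^* * z ^ (- (i%:Z - (lbnd u)%:Z)).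

Lemma lcoset_bnd (u : lpoly) (g : 'I_2) (j : int) :
  (lbnd u < `|j|)%N -> lcoef u ((nat_of_ord g)%:Z + 2 * j) = 0.
Proof.
move=> hj; apply: lcoefP.
have hg := ltn_ord g.
move: hj hg; set n := lbnd u; set m := nat_of_ord g.
case: j => [p|p] /=; rewrite ?NegzE; lia.
Qed.

Definition lcoset (g : 'I_2) (u : lpoly) : lpoly :=
  @LPoly (fun j => lcoef u ((nat_of_ord g)%:Z + 2 * j)) (lbnd u)
         (@lcoset_bnd u g).

Definition ldvd (f q : C -> C) : Prop :=
  exists c : lpoly, forall z : C, z != 0 -> f z = q z * lev c z.

Definition vm_ge (u : lpoly) (m : nat) : Prop :=
  ldvd (lev u) (fun z => (z - 1) ^+ m).

Definition sr_ge (u : lpoly) (m : nat) : Prop :=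
  ldvd (lev u) (fun z => (z + 1) ^+ m).

Definition selfadj (u : lpoly) : Prop :=
  forall k : int, lcoef u (- k) = (lcoef u k)^*.

Definition qtf (a Th b1 b2 : lpoly) : Prop :=
  forall z : C, z != 0 ->
    lev Th (z ^+ 2) * lstar_ev a z * lev a z
      + lstar_ev b1 z * lev b1 z - lstar_ev b2 z * lev b2 z = lev Th z
 /\ lev Th (z ^+ 2) * lstar_ev a z * lev a (- z)
      + lstar_ev b1 z * lev b1 (- z) - lstar_ev b2 z * lev b2 (- z) = 0.

Definition lmat (M : 'I_2 -> 'I_2 -> lpoly) (z : C) : 'M[C]_2 :=
  \matrix_(i < 2, j < 2) lev (M i j) z.
Definition lmat_star (M : 'I_2 -> 'I_2 -> lpoly) (z : C) : 'M[C]_2 :=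
  \matrix_(i < 2, j < 2) lstar_ev (M j i) z.

Definition D1m1 : 'M[C]_2 :=
  diag_mx (\row_(i < 2) (if i == ord0 then 1 else -1)).

Definition Nmat (A B : lpoly) (z : C) : 'M[C]_2 :=
  let A0 := lev (lcoset ord0 A) z in let A1 := lev (lcoset ord_max A) z in
  let B0 := lev (lcoset ord0 B) z in let B1 := lev (lcoset ord_max B) z in
  2^-1 *: \matrix_(i < 2, j < 2)
     (if i == ord0 then (if j == ord0 then A0 + B0 else A1 - B1)
      else (if j == ord0 then z * (A1 + B1) else A0 - B0)).

End LaurentFilters.

From HB Require Import structures.
From mathcomp Require Import all_boot all_order all_algebra.
From mathcomp Require Import zify ring.
Set Implicit Arguments. Unset Strict Implicit. Unset Printing Implicit Defensive.
Import Order.TTheory GRing.Theory Num.Theory.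
Local Open Scope ring_scope.

(* Write b = (1 - z)^nb bo.  Since Th(z) - Th(z^2) a^*(z) a(z) and
   -Th(z^2) a^*(z) a(-z) carry the factors (1 - z)^nb (1 - z^-1)^nb and
   (1 - z^-1)^nb (1 + z)^nb, the two quasi-tight identities for b amount,
   after cancelling these factors, to
     A(z) = bo^*(z) diag(1,-1) bo(z)   and   B(z) = bo^*(z) diag(1,-1) bo(-z);
   the cancellation is valid away from z = 1, -1 and extends to every z != 0
   because both sides are Laurent polynomials.  Expanding A, B and bo into
   cosets, the values of these two identities at w and -w form an invertible
   linear system in the entries of N_{a,Th|nb}(w^2) and of
   [bo^[0] bo^[1]]^* diag(1,-1) [bo^[0] bo^[1]](w^2), so the identities are
   equivalent to the matrix factorization.  Conversely, bo is obtained by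
   interleaving the columns of V. *)

Section QuasiTightPolyphase.
Variable C : numClosedFieldType.
Implicit Types (u v : lpoly C) (x y z w : C).

(* [lev] and [lstar_ev] are window sums of half-width [lbnd]; widening the
   window lets several Laurent polynomials be expanded over a common range. *)
Definition wsum (f : int -> C) (N : nat) : C :=
  \sum_(i < N.*2.+1) f (i%:Z - N%:Z).

Lemma wsumS f N : wsum f N.+1 = f (- (N.+1)%:Z) + wsum f N + f (N.+1)%:Z.
Proof.
rewrite /wsum doubleS big_ord_recl big_ord_recr /= addrA.
congr (_ + _ + _); first by congr f; lia.
- by apply: eq_bigr => i _; congr f; rewrite /bump /=; lia.
- by congr f; rewrite /bump /=; lia.
Qed.

Lemma eq_wsum f g N : f =1 g -> wsum f N = wsum g N.
Proof. by move=> fg; apply: eq_bigr => i _; rewrite fg. Qed.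

Lemma mulr_wsumr a f N : a * wsum f N = wsum (fun k => a * f k) N.
Proof. by rewrite /wsum mulr_sumr. Qed.

Lemma wsum_widen f M N : (forall k, (M < `|k|)%N -> f k = 0) -> (M <= N)%N ->
  wsum f N = wsum f M.
Proof.
move=> f0; elim: N => [|N IH]; first by rewrite leqn0 => /eqP ->.
rewrite leq_eqVlt => /orP [/eqP -> //|]; rewrite ltnS => leMN.
by rewrite wsumS IH // !f0 ?addr0 ?add0r //; lia.
Qed.

Lemma wsum_double f N : wsum f N.*2 + f (N.*2.+1)%:Z =
  wsum (fun j => f (2 * j)) N + wsum (fun j => f (1 + 2 * j)) N.
Proof.
elim: N => [|N IH]; first by rewrite /wsum !big_ord1.
rewrite doubleS !wsumS -[wsum f N.*2](addrK (f (N.*2.+1)%:Z)) IH.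
have -> : f (- (N.*2.+2)%:Z) = f (2 * - (N.+1)%:Z) by congr f; lia.
have -> : f (N.*2.+2)%:Z = f (2 * (N.+1)%:Z) by congr f; lia.
have -> : f (- (N.*2.+1)%:Z) = f (1 + 2 * - (N.+1)%:Z) by congr f; lia.
have -> : f (N.*2.+3)%:Z = f (1 + 2 * (N.+1)%:Z) by congr f; lia.
ring.
Qed.

Lemma lev_wsum u z N : (lbnd u <= N)%N ->
  lev u z = wsum (fun k => lcoef u k * z ^ k) N.
Proof.
by move=> leuN; rewrite (@wsum_widen _ (lbnd u)) // => k /lcoefP ->; rewrite mul0r.
Qed.

Lemma lstar_evE u z : lstar_ev u z = (lev u (z^-1)^*)^*.
Proof.
rewrite /lstar_ev /lev rmorph_sum; apply: eq_bigr => i _.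
rewrite rmorphM -exprz_inv (fmorphXz Num.conj).
by congr (_ * (_ ^ _)); exact/esym/conjCK.
Qed.

Definition polyphase u u0 u1 : Prop :=
  (forall j, lcoef u0 j = lcoef u (2 * j)) /\
  (forall j, lcoef u1 j = lcoef u (1 + 2 * j)).

Lemma polyphase_lcoset u : polyphase u (lcoset ord0 u) (lcoset ord_max u).
Proof. by split=> j //=; rewrite add0r. Qed.

Definition ileave_coef u0 u1 (k : int) : C :=
  if (k %% 2 == 0)%Z then lcoef u0 (k %/ 2)%Z else lcoef u1 (k %/ 2)%Z.

Lemma ileave_coefP u0 u1 k :
  ((maxn (lbnd u0) (lbnd u1)).*2.+1 < `|k|)%N -> ileave_coef u0 u1 k = 0.
Proof. by move=> lt_k; rewrite /ileave_coef; case: ifP => _; apply: lcoefP; lia. Qed.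

Definition ileave u0 u1 := LPoly (@ileave_coefP u0 u1).

Lemma polyphase_ileave u0 u1 : polyphase (ileave u0 u1) u0 u1.
Proof.
split=> j; rewrite /= /ileave_coef.
  have -> : ((2 * j) %% 2)%Z = 0 by lia.
  by rewrite eqxx; congr lcoef; lia.
have -> : ((1 + 2 * j) %% 2)%Z = 1 by lia.
by congr lcoef; lia.
Qed.

Lemma lev_polyphase u u0 u1 w : polyphase u u0 u1 -> w != 0 ->
  lev u w = lev u0 (w ^+ 2) + w * lev u1 (w ^+ 2).
Proof.
move=> [u0E u1E] w0; set M := maxn (lbnd u) (maxn (lbnd u0) (lbnd u1)).
rewrite (@lev_wsum u _ M.*2) ?(@lev_wsum u0 _ M) ?(@lev_wsum u1 _ M); try lia.
(* pad with the vanishing term of index 2M+1 so that the window splits evenly *)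
rewrite -[LHS]addr0 -(mul0r (w ^ (M.*2.+1)%:Z)) -(@lcoefP _ u (M.*2.+1)%:Z); last lia.
have sqrE j : (w ^+ 2) ^ j = w ^ (2 * j) by rewrite -exprz_exp.
rewrite wsum_double mulr_wsumr; congr (_ + _); apply: eq_wsum => j /=.
  by rewrite u0E sqrE.
by rewrite u1E sqrE expfzDr // expr1z mulrCA.
Qed.

Lemma lstar_ev_polyphase u u0 u1 w : polyphase u u0 u1 -> w != 0 ->
  lstar_ev u w = lstar_ev u0 (w ^+ 2) + w^-1 * lstar_ev u1 (w ^+ 2).
Proof.
move=> uu w0; have w'0 : (w^-1)^* != 0 by rewrite conjC_eq0 invr_eq0.
rewrite !lstar_evE (lev_polyphase uu w'0) rmorphD rmorphM -rmorphXn exprVn.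
by congr (_ + _ * _); exact: conjCK.
Qed.

Lemma lstar_ev_factor u v n :
  (forall z, z != 0 -> lev u z = (1 - z) ^+ n * lev v z) ->
  forall z, z != 0 -> lstar_ev u z = (1 - z^-1) ^+ n * lstar_ev v z.
Proof.
move=> uv z z0; rewrite !lstar_evE uv ?conjC_eq0 ?invr_eq0 //.
by rewrite rmorphM rmorphXn rmorphB rmorph1; congr ((1 - _) ^+ _ * _); exact: conjCK.
Qed.

Definition lscale_coef (c : C) u (k : int) := c * lcoef u k.

Lemma lscale_coefP c u k : (lbnd u < `|k|)%N -> lscale_coef c u k = 0.
Proof. by move=> /lcoefP u0; rewrite /lscale_coef u0 mulr0. Qed.

Definition lscale c u := LPoly (@lscale_coefP c u).

Lemma lev_lscale c u z : lev (lscale c u) z = c * lev u z.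
Proof. by rewrite /lev mulr_sumr; apply: eq_bigr => i _; rewrite mulrA. Qed.

Lemma vm_ge_factor u v n :
  (forall z, z != 0 -> lev u z = (1 - z) ^+ n * lev v z) -> vm_ge u n.
Proof.
move=> uv; exists (lscale ((-1) ^+ n) v) => z z0.
by rewrite lev_lscale uv // mulrA -exprMn mulrN1 opprB.
Qed.

Definition laurent (f : C -> C) : Prop :=
  exists (p : {poly C}) (n : nat), forall z, z != 0 -> f z = p.[z] / z ^+ n.

Lemma eq_laurent f g : f =1 g -> laurent f -> laurent g.
Proof. by move=> fg [p [n fE]]; exists p, n => z z0; rewrite -fg fE. Qed.

Lemma laurentD f g : laurent f -> laurent g -> laurent (fun z => f z + g z).
Proof.
move=> [p [n fE]] [q [m gE]]; exists (p * 'X^m + q * 'X^n), (n + m)%N => z z0.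
have [zn0 zm0] : z ^+ n != 0 /\ z ^+ m != 0 by rewrite !expf_neq0.
by rewrite fE // gE // !hornerE exprD; field; rewrite zn0 zm0.
Qed.

Lemma laurentM f g : laurent f -> laurent g -> laurent (fun z => f z * g z).
Proof.
move=> [p [n fE]] [q [m gE]]; exists (p * q), (n + m)%N => z z0.
have [zn0 zm0] : z ^+ n != 0 /\ z ^+ m != 0 by rewrite !expf_neq0.
by rewrite fE // gE // hornerM exprD; field; rewrite zn0 zm0.
Qed.

Lemma laurentN f : laurent f -> laurent (fun z => - f z).
Proof. by move=> [p [n fE]]; exists (- p), n => z z0; rewrite fE // hornerN mulNr. Qed.

Lemma laurentB f g : laurent f -> laurent g -> laurent (fun z => f z - g z).
Proof. by move=> lf lg; apply: laurentD (laurentN lg). Qed.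

Lemma laurent_comp_opp f : laurent f -> laurent (fun z => f (- z)).
Proof.
move=> [p [n fE]]; exists ((-1) ^+ n *: (p \Po - 'X)), n => z z0.
rewrite fE ?oppr_eq0 // hornerZ horner_comp hornerN hornerX [(- z) ^+ n]exprNn.
by rewrite invfM -exprVn invrN1; ring.
Qed.

Lemma laurent_sum m (F : 'I_m -> C -> C) :
  (forall i, laurent (F i)) -> laurent (fun z => \sum_(i < m) F i z).
Proof.
elim: m F => [|m IH] F lF.
  by exists 0, 0%N => z _; rewrite big_ord0 horner0 mul0r.
apply: (@eq_laurent (fun z => \sum_(i < m) F (widen_ord (leqnSn m) i) z + F ord_max z)).
  by move=> z; rewrite big_ord_recr.
exact: laurentD (IH _ (fun i => lF _)) (lF _).
Qed.

Lemma laurent_monomial c (k : int) : laurent (fun z => c * z ^ k).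
Proof.
case: k => n; last by exists c%:P, n.+1 => z _; rewrite hornerC.
by exists (c *: 'X^n), 0%N => z _; rewrite hornerZ hornerXn expr0 divr1.
Qed.

Lemma laurent_lev u : laurent (lev u).
Proof. exact: laurent_sum (fun i => laurent_monomial _ _). Qed.

Lemma laurent_lstar_ev u : laurent (lstar_ev u).
Proof. exact: laurent_sum (fun i => laurent_monomial _ _). Qed.

Lemma laurent_eq0 (s : seq C) f : laurent f ->
  (forall z, z != 0 -> z \notin s -> f z = 0) -> forall z, z != 0 -> f z = 0.
Proof.
move=> [p [n fE]] f0; set q := 'X * p * \prod_(x <- s) ('X - x%:P).
have qz z : q.[z] = 0.
  rewrite /q !hornerM hornerX horner_prod.
  have [-> | z0] := eqVneq z 0; first by rewrite !mul0r.
  have [zs | zNs] := boolP (z \in s).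
    by rewrite (big_rem z) //= hornerXsubC subrr mul0r mulr0.
  move: (f0 z z0 zNs); rewrite fE // => /eqP.
  rewrite mulf_eq0 invr_eq0 expf_eq0 (negbTE z0) andbF orbF => /eqP ->.
  by rewrite mulr0 mul0r.
have q0 : q = 0.
  apply: (@roots_geq_poly_eq0 _ _ [seq i%:R | i <- iota 0 (size q)]).
  - by apply/allP => x _; rewrite /root qz.
  - by rewrite map_inj_uniq ?iota_uniq //; apply: mulrIn; rewrite oner_eq0.
  - by rewrite size_map size_iota.
have p0 : p = 0.
  move/eqP: q0; rewrite /q !mulf_eq0 polyX_eq0 /=.
  by rewrite (negbTE (monic_neq0 (monic_prod_XsubC _ _ _))) orbF => /eqP.
by move=> z z0; rewrite fE // p0 horner0 mul0r.
Qed.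

Lemma laurent_mulfI (s : seq C) (F f g : C -> C) : laurent f -> laurent g ->
  (forall z, z != 0 -> z \notin s -> F z != 0) ->
  (forall z, z != 0 -> F z * f z = F z * g z) -> forall z, z != 0 -> f z = g z.
Proof.
move=> lf lg F0 Ffg z z0; apply/eqP; rewrite -subr_eq0; apply/eqP; move: z z0.
apply: (laurent_eq0 (s := s) (laurentB lf lg)) => z z0 zNs.
by apply/eqP; rewrite subr_eq0; apply/eqP/(mulfI (F0 z z0 zNs))/Ffg.
Qed.

Definition sgram (bo : 'I_2 -> lpoly C) x y : C :=
  lstar_ev (bo ord0) x * lev (bo ord0) y - lstar_ev (bo ord_max) x * lev (bo ord_max) y.

Lemma laurent_sgram bo : laurent (fun z => sgram bo z z).
Proof.
by apply: laurentB; apply: laurentM; exact: laurent_lstar_ev || exact: laurent_lev.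
Qed.

Lemma laurent_sgramN bo : laurent (fun z => sgram bo z (- z)).
Proof.
apply: laurentB; apply: laurentM;
  exact: laurent_lstar_ev || exact: laurent_comp_opp (laurent_lev _).
Qed.

Definition polyphase_gram (V : 'I_2 -> 'I_2 -> lpoly C) z : 'M[C]_2 :=
  lmat_star V z *m D1m1 C *m lmat V z.

Lemma polyphase_gramE V z i j : polyphase_gram V z i j =
  lstar_ev (V ord0 i) z * lev (V ord0 j) z - lstar_ev (V ord_max i) z * lev (V ord_max j) z.
Proof.
rewrite !mxE !big_ord_recr !big_ord0 /= !add0r !mxE !big_ord_recr !big_ord0 /= !add0r.
rewrite /D1m1 !mxE /=.
have -> : widen_ord (leqnSn 1) ord_max = ord0 :> 'I_2 by apply/val_inj.
by rewrite !mulr0n !mulr1n; ring.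
Qed.

Lemma sgram_polyphase bo V x y :
  (forall i, polyphase (bo i) (V i ord0) (V i ord_max)) ->
  x != 0 -> y != 0 -> y ^+ 2 = x ^+ 2 ->
  sgram bo x y = polyphase_gram V (x ^+ 2) ord0 ord0 + y * polyphase_gram V (x ^+ 2) ord0 ord_max
    + x^-1 * polyphase_gram V (x ^+ 2) ord_max ord0
    + x^-1 * y * polyphase_gram V (x ^+ 2) ord_max ord_max.
Proof.
move=> boV x0 y0 yx; rewrite /sgram !polyphase_gramE.
by rewrite !(lev_polyphase (boV _) y0) !(lstar_ev_polyphase (boV _) x0) yx; ring.
Qed.

Lemma ord2P (i : 'I_2) : i = ord0 \/ i = ord_max.
Proof. by case: i => [[|[|//]] ?]; [left | right]; apply: val_inj. Qed.

Lemma Nmat_eqP A B z (M : 'M[C]_2) : Nmat A B z = M <->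
  [/\ 2^-1 * (lev (lcoset ord0 A) z + lev (lcoset ord0 B) z) = M ord0 ord0,
      2^-1 * (lev (lcoset ord_max A) z - lev (lcoset ord_max B) z) = M ord0 ord_max,
      2^-1 * (z * (lev (lcoset ord_max A) z + lev (lcoset ord_max B) z)) = M ord_max ord0
    & 2^-1 * (lev (lcoset ord0 A) z - lev (lcoset ord0 B) z) = M ord_max ord_max].
Proof.
split=> [<- | [e00 e01 e10 e11]]; first by rewrite !mxE.
by apply/matrixP=> i j; rewrite !mxE; case: (ord2P i) => ->; case: (ord2P j) => ->.
Qed.

(* The a's, b's and g's stand for the cosets of A and B and the entries of
   the polyphase Gram matrix at w^2: the right-hand side lists A(w), A(-w),
   B(w), B(-w) and the corresponding values of [sgram]. *)
Lemma polyphase_system w a0 a1 b0 b1 g00 g01 g10 g11 : w != 0 ->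
  [/\ 2^-1 * (a0 + b0) = g00, 2^-1 * (a1 - b1) = g01,
      2^-1 * (w ^+ 2 * (a1 + b1)) = g10 & 2^-1 * (a0 - b0) = g11] <->
  [/\ a0 + w * a1 = g00 + w * g01 + w^-1 * g10 + w^-1 * w * g11,
      a0 + - w * a1 = g00 + - w * g01 + (- w)^-1 * g10 + (- w)^-1 * - w * g11,
      b0 + w * b1 = g00 + - w * g01 + w^-1 * g10 + w^-1 * - w * g11
    & b0 + - w * b1 = g00 + w * g01 + (- w)^-1 * g10 + (- w)^-1 * w * g11].
Proof.
move=> w0; have two0 : (2 : C) != 0 by rewrite pnatr_eq0.
split=> [[<- <- <- <-] | [e1 e2 e3 e4]]; first by split; field.
have a0E : a0 = g00 + g11.
  apply: (mulfI two0); transitivity ((a0 + w * a1) + (a0 + - w * a1)); first ring.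
  by rewrite e1 e2; field.
have a1E : a1 = g01 + w^-2 * g10.
  apply: (mulfI (mulf_neq0 two0 w0)); transitivity ((a0 + w * a1) - (a0 + - w * a1)); first ring.
  by rewrite e1 e2; field.
have b0E : b0 = g00 - g11.
  apply: (mulfI two0); transitivity ((b0 + w * b1) + (b0 + - w * b1)); first ring.
  by rewrite e3 e4; field.
have b1E : b1 = - g01 + w^-2 * g10.
  apply: (mulfI (mulf_neq0 two0 w0)); transitivity ((b0 + w * b1) - (b0 + - w * b1)); first ring.
  by rewrite e3 e4; field.
by rewrite a0E a1E b0E b1E; split; field.
Qed.

Lemma Nmat_polyphaseP A B bo V w :
  (forall i, polyphase (bo i) (V i ord0) (V i ord_max)) -> w != 0 ->
  Nmat A B (w ^+ 2) = polyphase_gram V (w ^+ 2) <->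
  [/\ lev A w = sgram bo w w, lev A (- w) = sgram bo (- w) (- w),
      lev B w = sgram bo w (- w) & lev B (- w) = sgram bo (- w) w].
Proof.
move=> boV w0; have Nw0 : - w != 0 by rewrite oppr_eq0.
rewrite !(sgram_polyphase boV) ?sqrrN //.
rewrite !(lev_polyphase (polyphase_lcoset A) w0, lev_polyphase (polyphase_lcoset A) Nw0).
rewrite !(lev_polyphase (polyphase_lcoset B) w0, lev_polyphase (polyphase_lcoset B) Nw0).
rewrite sqrrN.
exact: iff_trans (Nmat_eqP _ _ _ _) (polyphase_system _ _ _ _ _ _ _ _ w0).
Qed.

Lemma qtfE a Th (b : 'I_2 -> lpoly C) : qtf a Th (b ord0) (b ord_max) <->
  forall z, z != 0 ->
    lev Th z - lev Th (z ^+ 2) * lstar_ev a z * lev a z = sgram b z z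
 /\ - (lev Th (z ^+ 2) * lstar_ev a z * lev a (- z)) = sgram b z (- z).
Proof.
split=> qtf_b z z0; have [e1 e2] := qtf_b z z0; rewrite /sgram in e1 e2 *; split.
- by rewrite -e1; ring.
- by apply: (addrI (lev Th (z ^+ 2) * lstar_ev a z * lev a (- z))); rewrite subrr -e2 addrA.
- by rewrite -addrA -e1 addrC subrK.
- by rewrite -addrA -e2 subrr.
Qed.

Lemma qtf_sgramP a Th A B (b bo : 'I_2 -> lpoly C) n :
  (forall z, z != 0 -> lev Th z - lev Th (z ^+ 2) * lstar_ev a z * lev a z
                        = (1 - z) ^+ n * (1 - z^-1) ^+ n * lev A z) ->
  (forall z, z != 0 -> - (lev Th (z ^+ 2) * lstar_ev a z * lev a (- z))
                        = (1 - z^-1) ^+ n * (1 + z) ^+ n * lev B z) ->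
  (forall i z, z != 0 -> lev (b i) z = (1 - z) ^+ n * lev (bo i) z) ->
  qtf a Th (b ord0) (b ord_max) <->
  forall z, z != 0 -> lev A z = sgram bo z z /\ lev B z = sgram bo z (- z).
Proof.
move=> hA hB hb; rewrite qtfE.
have sgram_b x y : x != 0 -> y != 0 ->
    sgram b x y = (1 - x^-1) ^+ n * (1 - y) ^+ n * sgram bo x y.
  by move=> x0 y0; rewrite /sgram !(lstar_ev_factor (hb _)) // !hb //; ring.
have factor_neq0 z : z != 0 -> z \notin [:: 1; -1] ->
    (1 - z) ^+ n * (1 - z^-1) ^+ n != 0 /\ (1 - z^-1) ^+ n * (1 + z) ^+ n != 0.
  rewrite !inE negb_or => z0 /andP [z1 zN1].
  have z1' : 1 - z != 0 by rewrite subr_eq0 eq_sym.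
  have zi1 : 1 - z^-1 != 0 by rewrite subr_eq0 eq_sym invr_eq1.
  have zN1' : 1 + z != 0 by rewrite addrC addr_eq0.
  by rewrite !mulf_neq0 ?expf_neq0.
split=> [qtf_b | AB z z0]; last first.
  by rewrite !sgram_b ?oppr_eq0 // opprK -(AB z z0).1 -(AB z z0).2 hA // hB //; split; ring.
(* The factors vanish at z = 1 or -1; the identity principle covers those points. *)
have eqA : forall z, z != 0 -> lev A z = sgram bo z z.
  apply: (laurent_mulfI (s := [:: 1; -1]) (laurent_lev A) (laurent_sgram bo)
                        (F := fun z => (1 - z) ^+ n * (1 - z^-1) ^+ n)).
    by move=> z z0 /(factor_neq0 z z0) [].
  by move=> z z0; rewrite -hA // (qtf_b z z0).1 sgram_b //; ring.
have eqB : forall z, z != 0 -> lev B z = sgram bo z (- z).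
  apply: (laurent_mulfI (s := [:: 1; -1]) (laurent_lev B) (laurent_sgramN bo)
                        (F := fun z => (1 - z^-1) ^+ n * (1 + z) ^+ n)).
    by move=> z z0 /(factor_neq0 z z0) [].
  by move=> z z0; rewrite -hB // (qtf_b z z0).2 sgram_b ?oppr_eq0 // opprK; ring.
by move=> z z0; rewrite eqA ?eqB.
Qed.

End QuasiTightPolyphase.

Theorem theorem4p1 (C : numClosedFieldType) (a Th : lpoly C) (nb : nat)
  (hnb : (0 < nb)%N)
  (hTh : selfadj Th)
  (hsr : sr_ge a nb)
  (hvm : ldvd (fun z => lev Th z - lev Th (z ^+ 2) * lstar_ev a z * lev a z)
              (fun z => (z - 1) ^+ (2 * nb)))
  (A B : lpoly C)
  (hA : forall z : C, z != 0 ->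
     lev Th z - lev Th (z ^+ 2) * lstar_ev a z * lev a z
       = (1 - z) ^+ nb * (1 - z^-1) ^+ nb * lev A z)
  (hB : forall z : C, z != 0 ->
     - (lev Th (z ^+ 2) * lstar_ev a z * lev a (- z))
       = (1 - z^-1) ^+ nb * (1 + z) ^+ nb * lev B z) :
  (forall b : 'I_2 -> lpoly C,
     qtf a Th (b ord0) (b ord_max) ->
     vm_ge (b ord0) nb -> vm_ge (b ord_max) nb ->
     forall bo : 'I_2 -> lpoly C,
       (forall (i : 'I_2) (z : C), z != 0 -> lev (b i) z = (1 - z) ^+ nb * lev (bo i) z) ->
       forall z : C, z != 0 ->
         Nmat A B z
           = lmat_star (fun i j => lcoset j (bo i)) z *m D1m1 C
               *m lmat (fun i j => lcoset j (bo i)) z)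
  /\
  (forall V : 'I_2 -> 'I_2 -> lpoly C,
     (forall z : C, z != 0 -> Nmat A B z = lmat_star V z *m D1m1 C *m lmat V z) ->
     forall b : 'I_2 -> lpoly C,
       (forall (i : 'I_2) (z : C), z != 0 ->
          lev (b i) z = (1 - z) ^+ nb
                        * (lev (V i ord0) (z ^+ 2) + z * lev (V i ord_max) (z ^+ 2))) ->
       qtf a Th (b ord0) (b ord_max) /\ vm_ge (b ord0) nb /\ vm_ge (b ord_max) nb).
Proof.
(* hnb, hTh, hsr and hvm only guarantee that A and B exist. *)
split.
- move=> b qtf_b _ _ bo hbo z z0.
  have w0 : sqrtC z != 0 by rewrite sqrtC_eq0.
  have Nw0 : - sqrtC z != 0 by rewrite oppr_eq0.
  have [Aw Bw] := (qtf_sgramP hA hB hbo).1 qtf_b _ w0.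
  have [ANw BNw] := (qtf_sgramP hA hB hbo).1 qtf_b _ Nw0.
  rewrite -(sqrtCK z); apply/(Nmat_polyphaseP A B (fun i => polyphase_lcoset (bo i)) w0).
  by rewrite opprK in BNw; split.
- move=> V hV b hb.
  pose bo i := ileave (V i ord0) (V i ord_max).
  have boV i : polyphase (bo i) (V i ord0) (V i ord_max) := polyphase_ileave _ _.
  have hbo i z : z != 0 -> lev (b i) z = (1 - z) ^+ nb * lev (bo i) z.
    by move=> z0; rewrite hb // (lev_polyphase (boV i)).
  split; last by split; apply: vm_ge_factor (hbo _).
  apply/(qtf_sgramP hA hB hbo) => z z0.
  by have [] := (Nmat_polyphaseP A B boV z0).1 (hV _ (expf_neq0 2 z0)).
Qed.
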